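(* Let $k$ be a field of characteristic $0$, $R = k[t_1, \dots, t_n]$, and let $x_1, \dots, x_m \in (k^* )^n$ with $x_i = (x_{i,1}, \dots, x_{i,n})$. Let $\mathfrak{m} = (t_1 - 1, \dots, t_n - 1) \subset R$, let $\mathfrak{p} \subset \mathfrak{m}$ be a prime ideal of height $n'$, and let $A = \operatorname{Stab}_X(\mathfrak{p})$. Then there exists a subgroup $B \subset \mathbf{Z}^n$ of rank at least $n'$ such that $\langle a, b \rangle_X = 1$ for all $a \in A$ and $b \in B$.
   Context: For $a \in \mathbf{Z}^m$ write $x^a = \prod_{i=1}^m x_i^{a_i} \in (k^* )^n$ (coordinatewise). An element $z = (z_1,\dots,z_n) \in (k^* )^n$ acts on $R$ by $(z\cdot f)(t_1,\dots,t_n) = f(z_1t_1, \dots, z_nt_n)$, and for an ideal $\mathfrak{p}$, $\operatorname{Stab}_X(\mathfrak{p}) = \{a \in \mathbf{Z}^m : x^a \cdot \mathfrak{p} = \mathfrak{p}\}$. The pairing $\langle\cdot,\cdot\rangle_X: \mathbf{Z}^m \times \mathbf{Z}^n \to k^*$ is $\langle (a_i), (b_j) \rangle_X = \prod_{i,j} x_{i,j}^{a_i b_j}$. *)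

From mathcomp Require Import all_boot all_algebra mpoly.
Set Implicit Arguments. Unset Strict Implicit. Unset Printing Implicit Defensive.
Import GRing.Theory.
Local Open Scope ring_scope.

Section Defs.
Variables (k : fieldType) (n : nat).
Local Notation R := {mpoly k[n]}.

Definition is_ideal (I : R -> Prop) : Prop :=
  [/\ I 0, (forall f g, I f -> I g -> I (f + g)) & (forall r f, I f -> I (r * f))].

Definition is_prime_ideal (I : R -> Prop) : Prop :=
  [/\ is_ideal I, ~ I 1 & (forall f g, I (f * g) -> I f \/ I g)].

Definition subideal (I J : R -> Prop) : Prop := forall f, I f -> J f.
Definition strict_subideal (I J : R -> Prop) : Prop := subideal I J /\ ~ subideal J I.

Definition prime_chain_to (p : R -> Prop) (h : nat) (c : nat -> R -> Prop) : Prop :=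
  [/\ forall i, (i <= h)%N -> is_prime_ideal (c i),
      forall i, (i < h)%N -> strict_subideal (c i) (c i.+1)
    & forall f, c h f <-> p f].

Definition prime_height (p : R -> Prop) (h : nat) : Prop :=
  (exists c, prime_chain_to p h c) /\ (forall h' c, prime_chain_to p h' c -> (h' <= h)%N).

Definition ideal_gen (r : nat) (g : 'I_r -> R) (f : R) : Prop :=
  exists c : 'I_r -> R, f = \sum_(i < r) c i * g i.

Definition max_ideal_one : R -> Prop := ideal_gen (fun i : 'I_n => 'X_i - 1).

Definition torus_act (z : 'I_n -> k) (f : R) : R :=
  comp_mpoly [tuple z i *: 'X_i | i < n] f.

Definition xpow (m : nat) (x : 'I_m -> 'I_n -> k) (a : 'rV[int]_m) : 'I_n -> k :=
  fun j => \prod_(i < m) x i j ^ (a 0 i).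

Definition act_fixes (z : 'I_n -> k) (p : R -> Prop) : Prop :=
  (forall f, p f -> p (torus_act z f)) /\
  (forall g, p g -> exists f, p f /\ g = torus_act z f).

Definition Stab (m : nat) (x : 'I_m -> 'I_n -> k) (p : R -> Prop) (a : 'rV[int]_m) : Prop :=
  act_fixes (xpow x a) p.

Definition pairing (m : nat) (x : 'I_m -> 'I_n -> k) (a : 'rV[int]_m) (b : 'rV[int]_n) : k :=
  \prod_(i < m) \prod_(j < n) x i j ^ (a 0 i * b 0 j).

End Defs.

Definition is_subgroup (n : nat) (B : 'rV[int]_n -> Prop) : Prop :=
  [/\ B 0, (forall u v, B u -> B v -> B (u + v)) & (forall u, B u -> B (- u))].

(* rank of a subgroup B of Z^n is at least r: B contains r Z-linearly
   independent vectors (independence tested over Q) *)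
Definition rank_at_least (n : nat) (B : 'rV[int]_n -> Prop) (r : nat) : Prop :=
  exists v : 'I_r -> 'rV[int]_n, (forall i, B (v i)) /\
    \rank (\matrix_(i < r, j < n) ((v i 0 j)%:~R : rat)) = r.

From Stdlib Require Import Classical.
From mathcomp Require Import all_boot all_algebra mpoly ring zify.
Set Implicit Arguments. Unset Strict Implicit. Unset Printing Implicit Defensive.
Import GRing.Theory.
Local Open Scope ring_scope.

(* Let B be the annihilator of A = Stab_X(p) under the pairing, and suppose the
   rational span of B has dimension r < n'.  Then some set C of n - r coordinates
   carries no nonzero vector of that span, so distinct monomials t^e in the
   variables of C have distinct characters a |-> <a, e>_X on A.  For f in p and
   a in A we have x^a . f in p, a subset of m, hence f(x^a) = 0: a linear relation
   among these characters.  By Dedekind's independence of characters p contains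
   no nonzero polynomial in the variables of C, so the Hilbert function of R/p
   grows like N^(n - r).  Along a prime chain of length n' ending at p this growth
   exponent rises by one at each step, and it never exceeds n; hence
   (n - r) + n' <= n, a contradiction. *)

Section TorusAction.
Variables (k : fieldType) (n : nat).
Local Notation R := {mpoly k[n]}.

Lemma torus_actE (z : 'I_n -> k) (f : R) :
  torus_act z f = \sum_(m <- msupp f) (f@_m * \prod_(i < n) z i ^+ m i) *: 'X_[m].
Proof.
rewrite /torus_act comp_mpolyE; apply: eq_bigr => m _.
rewrite -scalerA mpolyXE_id -scaler_prod; congr (_ *: _); apply: eq_bigr => i _.
by rewrite tnth_map tnth_ord_tuple exprZn.
Qed.

Lemma torus_act_coef (z : 'I_n -> k) (f : R) m :
  (torus_act z f)@_m = f@_m * \prod_(i < n) z i ^+ m i.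
Proof.
rewrite torus_actE raddf_sum /=.
under eq_bigr => m' _ do rewrite mcoeffZ mcoeffX.
have [fm|] := boolP (m \in msupp f).
  rewrite (bigD1_seq m fm (msupp_uniq f)) /= eqxx mulr1 [X in _ + X]big1 ?addr0 //.
  by move=> m' /negPf ->; rewrite mulr0.
move=> fm; rewrite big1_seq => [|m' fm']; last first.
  by case: eqP fm => [<- /negP//|_ _]; rewrite mulr0.
by move: fm; rewrite mcoeff_msupp negbK => /eqP->; rewrite mul0r.
Qed.

Lemma torus_act_comp (z w : 'I_n -> k) (f : R) :
  torus_act z (torus_act w f) = torus_act (fun i => w i * z i) f.
Proof.
apply/mpolyP => m; rewrite !torus_act_coef -mulrA -big_split /=.
by congr (_ * _); apply: eq_bigr => i _; rewrite exprMn.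
Qed.

Lemma torus_act_id (z : 'I_n -> k) (f : R) : (forall i, z i = 1) -> torus_act z f = f.
Proof.
move=> z1; apply/mpolyP => m.
by rewrite torus_act_coef big1 ?mulr1 // => i _; rewrite z1 expr1n.
Qed.

Lemma torus_act_meval1 (z : 'I_n -> k) (f : R) :
  (torus_act z f).@[fun _ => 1] = f.@[z].
Proof.
rewrite torus_actE raddf_sum /= [RHS]mevalE; apply: eq_bigr => m _.
by rewrite mevalZ mevalX [X in _ * X = _]big1 ?mulr1 // => i _; exact: expr1n.
Qed.

Lemma max_ideal_one_meval (f : R) : max_ideal_one f -> f.@[fun _ => 1] = 0.
Proof.
case=> c ->; rewrite raddf_sum /= big1 // => i _.
by rewrite mevalM mevalB mevalXU meval1 subrr mulr0.
Qed.

End TorusAction.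

Section CharacterIndependence.
Variables (k : fieldType) (V : zmodType) (G : V -> Prop) (I : finType)
  (chi : I -> V -> k) (a0 : V).
Hypotheses (GD : forall a b, G a -> G b -> G (a + b)) (G_a0 : G a0)
  (chiD : forall i a b, chi i (a + b) = chi i a * chi i b)
  (chi_neq0 : forall i a, chi i a != 0)
  (chi_sep : forall i j, i != j -> exists a, G a /\ chi i a != chi j a).

Lemma chars_lin_indep_on (S : {set I}) (c : I -> k) :
  (forall i, i \notin S -> c i = 0) ->
  (forall a, G a -> \sum_i c i * chi i a = 0) -> forall i, c i = 0.
Proof.
move Hs : #|S| => s; elim: s S c Hs => [|s IH] S c Hs c_out rel.
  by move=> i; apply: c_out; move/eqP: Hs; rewrite cards_eq0 => /eqP->; rewrite inE.
have [S0|[i0 i0S]] := set_0Vmem S; first by move=> i; apply: c_out; rewrite S0 inE.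
have c_other i : i != i0 -> c i = 0.
  move=> ii0; have [g [Gg chig]] := chi_sep ii0.
  (* Eliminate the i0-term by comparing the relation at a + g with g times it at a. *)
  pose c' i := c i * (chi i g - chi i0 g).
  suff /eqP : c' i = 0 by rewrite mulf_eq0 subr_eq0 (negPf chig) orbF => /eqP.
  apply: (IH (S :\ i0)).
  - by apply/eqP; rewrite -eqSS -Hs (cardsD1 i0 S) i0S.
  - move=> j; rewrite !inE negb_and negbK /c' => /orP[/eqP->|/c_out->].
      by rewrite subrr mulr0.
    by rewrite mul0r.
  - move=> a Ga; rewrite /c'.
    transitivity (\sum_j c j * chi j (a + g) - chi i0 g * \sum_j c j * chi j a).
      by rewrite mulr_sumr -sumrB; apply: eq_bigr => j _; rewrite chiD; ring.
    by rewrite (rel _ (GD Ga Gg)) (rel _ Ga) mulr0 subr0.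
move=> i; have [->|/c_other//] := eqVneq i i0.
have := rel _ G_a0; rewrite (bigD1 i0) //= big1 ?addr0 => [/eqP|j /c_other->].
  by rewrite mulf_eq0 (negPf (chi_neq0 _ _)) orbF => /eqP.
by rewrite mul0r.
Qed.

Lemma chars_lin_indep (c : I -> k) :
  (forall a, G a -> \sum_i c i * chi i a = 0) -> forall i, c i = 0.
Proof. by apply: (@chars_lin_indep_on [set: I]) => i; rewrite inE. Qed.

End CharacterIndependence.

Section Growth.
Variables (k : fieldType) (n : nat).
Local Notation R := {mpoly k[n]}.

Definition indep_mod (P : R -> Prop) (M K : nat) : Prop :=
  exists (I : finType) (f : I -> R), [/\ #|I| = K, forall i, (msize (f i) <= M)%N &
    forall c : I -> k, P (\sum_i c i *: f i) -> forall i, c i = 0].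

(* A lower bound [N ^ s / c0] on the Hilbert function of [R / P] in degree [a * N]:
   [R / P] has dimension at least [s]. *)
Definition growth (P : R -> Prop) (s : nat) : Prop :=
  exists a c0, (0 < a)%N /\ forall N, exists K,
    (N ^ s <= c0 * K)%N /\ indep_mod P (a * N).+1 K.

Definition mnm_supported (C : {set 'I_n}) (e : 'X_{1..n}) : Prop :=
  forall j, j \notin C -> e j = 0%N.

Definition free_monomials_mod (P : R -> Prop) (C : {set 'I_n}) : Prop :=
  forall (I : finType) (e : I -> 'X_{1..n}), injective e ->
    (forall i, mnm_supported C (e i)) ->
    forall c : I -> k, P (\sum_i c i *: 'X_[e i]) -> forall i, c i = 0.

Lemma indep_mod0 P M : indep_mod P M 0.
Proof.
exists 'I_0, (fun _ => 0); split => [|_|c _ []//]; first by rewrite card_ord.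
by rewrite msize0.
Qed.

Lemma indep_mod_le P M M' K : (M <= M')%N -> indep_mod P M K -> indep_mod P M' K.
Proof.
move=> leMM' [I [f [cardI szf indf]]]; exists I, f; split => // i.
exact: leq_trans (szf i) leMM'.
Qed.

(* Reduce modulo [Q] to kill the [q * f2 j] terms, then use [q \notin P]. *)
Lemma indep_mod_cat_mul P Q q M1 M2 K1 K2 :
  is_prime_ideal P -> is_ideal Q -> subideal P Q -> Q q -> ~ P q ->
  indep_mod Q M1 K1 -> indep_mod P M2 K2 ->
  indep_mod P (maxn M1 (M2 + (msize q).+1)) (K1 + K2).
Proof.
move=> [_ _ P_prime] [_ QD QM] PQ Qq Pq [I1 [f1 [cardI1 szf1 indf1]]]
  [I2 [f2 [cardI2 szf2 indf2]]].
exists (I1 + I2)%type, (fun i => match i with inl i => f1 i | inr j => q * f2 j end).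
split=> [|[i|j] /=|c]; first by rewrite card_sum cardI1 cardI2.
- by rewrite leq_max szf1.
- rewrite leq_max; apply/orP; right.
  have := msizeM_le q (f2 j); have := szf2 j; lia.
rewrite big_sumType /=; set u := \sum_(i : I1) _; set w := \sum_(j : I2) c (inr j) *: f2 j.
have -> : \sum_(j : I2) c (inr j) *: (q * f2 j) = w * q.
  by rewrite mulr_suml; apply: eq_bigr => j _; rewrite -scalerAl mulrC.
move=> Puwq; have Qu : Q u.
  rewrite -[u](addrK (w * q)) -mulN1r; apply: QD; first exact: PQ.
  by apply/QM/QM.
have c1 i : c (inl i) = 0 by exact: (indf1 (fun i => c (inl i)) Qu).
have u0 : u = 0 by rewrite /u big1 // => i _; rewrite c1 scale0r.
move: Puwq; rewrite u0 add0r => /P_prime[Pw|//] [i|j]; first exact: c1.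
exact: (indf2 (fun j => c (inr j))).
Qed.

Lemma indep_mod_mul_iter P Q q M K :
  is_prime_ideal P -> is_ideal Q -> subideal P Q -> Q q -> ~ P q ->
  indep_mod Q M K -> forall j, indep_mod P (M + j * (msize q).+1) (j * K).
Proof.
move=> P_prime Q_ideal PQ Qq Pq indQ.
elim=> [|j IH]; first by rewrite mul0n; exact: indep_mod0.
rewrite mulSn; apply: indep_mod_le (indep_mod_cat_mul P_prime Q_ideal PQ Qq Pq indQ IH).
by rewrite geq_max; apply/andP; split; lia.
Qed.

Lemma mpoly_eq0_box M (f : R) : (msize f <= M.+1)%N ->
  (forall d : {ffun 'I_n -> 'I_M.+1}, f@_[multinom (d j : nat) | j < n] = 0) -> f = 0.
Proof.
move=> szf box0; apply/mpolyP => m; rewrite mcoeff0.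
have [m_box|/forallPn[j]] := boolP [forall j, (m j <= M)%N].
  pose d : {ffun 'I_n -> 'I_M.+1} := [ffun j => inord (m j)].
  have -> : m = [multinom (d j : nat) | j < n].
    by apply/mnmP => j; rewrite mnmE ffunE inordK // ltnS (forallP m_box).
  exact: box0.
rewrite -ltnNge => ltMmj; apply/eqP; rewrite -[_ == 0]negbK -mcoeff_msupp.
apply: msize_mdeg_ge; apply: leq_trans szf (leq_trans ltMmj _).
by rewrite mdegE (bigD1 j) //= leq_addr.
Qed.

Lemma indep_mod_card_le P M K : is_ideal P -> indep_mod P M.+1 K -> (K <= M.+1 ^ n)%N.
Proof.
case=> P0 _ _ [I [f [<- szf indf]]].
pose D := {ffun 'I_n -> 'I_M.+1}.
pose A : 'M[k]_(#|I|, #|D|) :=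
  \matrix_(i, d) (f (enum_val i))@_[multinom ((enum_val d : D) j : nat) | j < n].
suff /eqP <- : row_free A by rewrite (leq_trans (rank_leq_col A)) // card_ffun !card_ord.
apply/inj_row_free => v vA0.
pose g := \sum_i v 0 (enum_rank i) *: f i.
have g0 : g = 0.
  apply: (@mpoly_eq0_box M).
    apply: leq_trans (mmeasure_sum _ _ _ _) _; apply/bigmax_leqP => i _.
    exact: leq_trans (msizeZ_le _ _) (szf i).
  move=> d; have := congr1 (fun u : 'rV_ _ => u 0 (enum_rank d)) vA0.
  rewrite !mxE; under eq_bigr do rewrite /A mxE enum_rankK; move=> <-.
  rewrite raddf_sum /= (reindex _ (onW_bij _ (enum_val_bij I))) /=.
  by apply: eq_bigr => i _; rewrite mcoeffZ enum_valK.
apply/rowP => i; rewrite mxE -(enum_valK i).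
by apply: (indf (fun i => v 0 (enum_rank i))); rewrite -/g g0.
Qed.

Lemma growth_ext P P' s : (forall f, P f <-> P' f) -> growth P s -> growth P' s.
Proof.
move=> PP' [a [c0 [a_gt0 grP]]]; exists a, c0; split=> // N.
have [K [leNK [I [f [cardI szf indf]]]]] := grP N.
by exists K; split=> //; exists I, f; split=> // c /PP'; exact: indf.
Qed.

Lemma growth_subprime P Q q s :
  is_prime_ideal P -> is_ideal Q -> subideal P Q -> Q q -> ~ P q ->
  growth Q s -> growth P s.+1.
Proof.
move=> P_prime Q_ideal PQ Qq Pq [a [c0 [a_gt0 grQ]]].
exists (a * (msize q).+2)%N, c0; split=> [|N]; first by rewrite muln_gt0 a_gt0.
have [K [leNK indQ]] := grQ N; exists (a * N * K)%N; split.
  rewrite expnSr (leq_trans (leq_mul leNK (leq_pmull N a_gt0))) //.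
  by rewrite -mulnA [(K * _)%N]mulnC.
have := indep_mod_mul_iter P_prime Q_ideal PQ Qq Pq indQ (a * N).
by apply: indep_mod_le; rewrite mulnS; lia.
Qed.

Lemma growth_le_nvar P s : is_ideal P -> growth P s -> (s <= n)%N.
Proof.
move=> P_ideal [a [c0 [a_gt0 grP]]]; rewrite leqNgt; apply/negP => lt_ns.
(* For N large, N ^ s outgrows the count (a N + 1) ^ n of monomials of degree <= a N. *)
pose N := (c0 * (2 * a) ^ n).+1.
have [K [leNK indK]] := grP N.
have : (N ^ n.+1 <= c0 * (2 * a * N) ^ n)%N.
  apply: leq_trans (leq_pexp2l _ lt_ns) (leq_trans leNK _) => //.
  rewrite leq_mul2l (leq_trans (indep_mod_card_le P_ideal indK)) ?orbT //.
  case: n {lt_ns indK} => // n'; rewrite leq_exp2r //; lia.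
rewrite expnS !expnMn mulnA leq_pmul2r ?expn_gt0 //.
by rewrite /N -expnMn ltnn.
Qed.

Lemma strict_subideal_witness (I J : R -> Prop) :
  strict_subideal I J -> exists2 q, J q & ~ I q.
Proof.
case=> _ JI; apply: NNPP => noq; apply: JI => f Jf.
by apply: NNPP => If; apply: noq; exists f.
Qed.

Lemma prime_chain_growth_le p h c s :
  prime_chain_to p h c -> growth p s -> (s + h <= n)%N.
Proof.
elim: h p s => [|h IH] p s [c_prime c_strict c_top] grp.
  have [c0_ideal _ _] := c_prime 0%N (leqnn 0).
  rewrite addn0; apply: growth_le_nvar c0_ideal _.
  exact: growth_ext (fun f => iff_sym (c_top f)) grp.
have [sub_h _] := c_strict h (ltnSn h).
have [q cq ncq] := strict_subideal_witness (c_strict h (ltnSn h)).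
have [ch1_ideal _ _] := c_prime h.+1 (leqnn _).
have gr_h : growth (c h) s.+1.
  apply: growth_subprime (c_prime h (leqnSn h)) ch1_ideal sub_h cq ncq _.
  exact: growth_ext (fun f => iff_sym (c_top f)) grp.
rewrite addnS -addSn; apply: IH gr_h; split=> // [i le_ih|i lt_ih].
  by apply: c_prime; rewrite leqW.
by apply: c_strict; rewrite leqW.
Qed.

Lemma growth_free_monomials P C : free_monomials_mod P C -> growth P #|C|.
Proof.
move=> free_mono; exists #|C|.+1, 1%N; split=> // N.
pose S := {j : 'I_n | j \in C}.
pose I := {ffun S -> 'I_N.+1}.
pose e (phi : I) : 'X_{1..n} :=
  [multinom (if @insub _ _ S j is Some j' then (phi j' : nat) else 0%N) | j < n].
have cardS : #|{: S}| = #|C| by rewrite card_sig; apply: eq_card.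
exists #|I|; split.
  rewrite mul1n card_ffun card_ord cardS.
  by case: #|C| => // s; rewrite leq_exp2r.
exists I, (fun phi => 'X_[e phi]); split=> // [phi|].
  rewrite msizeX ltnS mdegE.
  apply: leq_trans (_ : (\sum_(j < n) (if j \in C then N else 0) <= _)%N).
    apply: leq_sum => j _; rewrite mnmE; case: insubP => [j' jC _|/negPf ->] //.
    by rewrite jC -ltnS.
  by rewrite -big_mkcond sum_nat_const /= leq_mul2r leqnSn orbT.
apply: free_mono => [phi psi e_eq|phi j /negPf jC].
  apply/ffunP => j'; have := congr1 (fun m : 'X_{1..n} => m (val j')) e_eq.
  by rewrite /e !mnmE valK => /ord_inj.
by rewrite mnmE insubF.
Qed.

End Growth.

Section Pairing.
Variables (k : fieldType) (n m : nat) (x : 'I_m -> 'I_n -> k).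
Hypothesis x_neq0 : forall i j, x i j != 0.

Lemma pairingDl a1 a2 b : pairing x (a1 + a2) b = pairing x a1 b * pairing x a2 b.
Proof.
rewrite /pairing -big_split; apply: eq_bigr => i _.
by rewrite -big_split; apply: eq_bigr => j _; rewrite mxE mulrDl expfzDr.
Qed.

Lemma pairingDr a b1 b2 : pairing x a (b1 + b2) = pairing x a b1 * pairing x a b2.
Proof.
rewrite /pairing -big_split; apply: eq_bigr => i _.
by rewrite -big_split; apply: eq_bigr => j _; rewrite mxE mulrDr expfzDr.
Qed.

Lemma pairing0r a : pairing x a 0 = 1.
Proof.
by rewrite /pairing big1 // => i _; rewrite big1 // => j _; rewrite mxE mulr0 expr0z.
Qed.

Lemma pairing_neq0 a b : pairing x a b != 0.
Proof. by apply/prodf_neq0 => i _; apply/prodf_neq0 => j _; exact: expfz_neq0. Qed.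

Lemma xpow0 j : xpow x 0 j = 1.
Proof. by rewrite /xpow big1 // => i _; rewrite mxE expr0z. Qed.

Lemma xpowD a1 a2 j : xpow x (a1 + a2) j = xpow x a1 j * xpow x a2 j.
Proof.
by rewrite /xpow -big_split; apply: eq_bigr => i _; rewrite mxE expfzDr.
Qed.

Definition mnm_row (e : 'X_{1..n}) : 'rV[int]_n := \row_j (e j)%:Z.

Lemma meval_xpowX e a : ('X_[e]).@[xpow x a] = pairing x a (mnm_row e).
Proof.
rewrite mevalX /pairing exchange_big /=; apply: eq_bigr => j _.
by rewrite /xpow -prodrXl; apply: eq_bigr => i _; rewrite mxE -exprz_exp.
Qed.

Variable p : {mpoly k[n]} -> Prop.

Lemma Stab0 : Stab x p 0.
Proof.
have act0 f : torus_act (xpow x 0) f = f by apply: torus_act_id => j; exact: xpow0.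
by split=> [f|g pg]; [rewrite act0 | exists g; rewrite act0].
Qed.

Lemma StabD a1 a2 : Stab x p a1 -> Stab x p a2 -> Stab x p (a1 + a2).
Proof.
have actD f : torus_act (xpow x (a1 + a2)) f =
              torus_act (xpow x a2) (torus_act (xpow x a1) f).
  rewrite torus_act_comp; apply/mpolyP => e; rewrite !torus_act_coef.
  by congr (_ * _); apply: eq_bigr => j _; rewrite xpowD.
move=> [fix1 onto1] [fix2 onto2]; split=> [f pf|g pg]; first by rewrite actD; apply/fix2/fix1.
have [f1 [pf1 ->]] := onto2 g pg; have [f2 [pf2 ->]] := onto1 f1 pf1.
by exists f2; rewrite actD.
Qed.

Lemma stab_free_monomials C :
  subideal p (@max_ideal_one k n) ->
  (forall e1 e2, mnm_supported C e1 -> mnm_supported C e2 ->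
     (forall a, Stab x p a -> pairing x a (mnm_row e1) = pairing x a (mnm_row e2)) ->
     e1 = e2) ->
  free_monomials_mod p C.
Proof.
move=> pm sepC I e e_inj e_supp c pf.
apply: (@chars_lin_indep k _ (Stab x p) I (fun i a => pairing x a (mnm_row (e i))) 0).
- exact: StabD.
- exact: Stab0.
- by move=> i a1 a2; rewrite pairingDl.
- by move=> i a; exact: pairing_neq0.
- move=> i j /eqP neq_ij; apply: NNPP => nsep.
  apply/neq_ij/e_inj/sepC => [||a Sa]; try exact: e_supp.
  by apply: NNPP => neq; apply: nsep; exists a; split=> //; apply/eqP.
- move=> a [fixa _]; have := max_ideal_one_meval (pm _ (fixa _ pf)).
  rewrite torus_act_meval1 raddf_sum /=; apply: etrans.
  by apply: eq_bigr => i _; rewrite mevalZ meval_xpowX.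
Qed.

End Pairing.

Lemma exists_free_coords (F : fieldType) (r n : nat) (V : 'M[F]_(r, n)) :
  \rank V = r -> exists C : {set 'I_n}, #|C| = (n - r)%N /\
    forall u : 'rV_n, (u <= V)%MS -> (forall j, j \notin C -> u 0 j = 0) -> u = 0.
Proof.
move=> rkV; set f := maxrankfun V^T.
have rkVT : \rank V^T = r by rewrite mxrank_tr.
set pivots := [set f i | i in 'I_(\rank V^T)].
exists (~: pivots); split.
  have := cardsC pivots; rewrite card_imset ?card_ord; last exact: maxrankfun_inj.
  move=> sum_card; apply/eqP; rewrite -(eqn_add2l (\rank V^T)) sum_card rkVT subnKC //.
  by rewrite -{1}rkV rank_leq_col.
move=> u /submxP[D ->] u_piv0.
(* The pivot columns [f i] of [V] are independent, so [D *m V] is determined by them. *)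
pose W := (rowsub f V^T)^T.
have W_free : row_free W.
  by rewrite /row_free /W mxrank_tr (eqP (maxrowsub_free V^T)) mxrank_tr rkV.
suff : D *m W = 0 by move/eqP; rewrite mulmx_free_eq0 // => /eqP->; rewrite mul0mx.
apply/rowP => i; rewrite [RHS]mxE -(u_piv0 (f i)); last by rewrite inE negbK imset_f.
by rewrite !mxE; apply: eq_bigr => l _; rewrite !mxE.
Qed.

Lemma mxrank_extend (F : fieldType) (r n : nat) (V : 'M[F]_(r, n)) (u : 'rV_n)
    (V' : 'M_(r.+1, n)) :
  \rank V = r -> ~~ (u <= V)%MS ->
  (forall i, row (lift ord_max i) V' = row i V) -> row ord_max V' = u ->
  \rank V' = r.+1.
Proof.
move=> rkV uV rowV' lastV'; apply/eqP; rewrite eqn_leq rank_leq_row /=.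
have sub : (V + u <= V')%MS.
  rewrite addsmx_sub; apply/andP; split; last by rewrite -lastV' row_sub.
  by apply/row_subP => i; rewrite -rowV' row_sub.
apply: leq_trans (mxrankS sub).
have : (V < V + u)%MS.
  rewrite ltmxE addsmxSl /=; apply: contra uV.
  exact: submx_trans (addsmxSr _ _).
by rewrite ltmxErank => /andP[_]; rewrite rkV.
Qed.

Definition annihilator (k : fieldType) (m n : nat) (x : 'I_m -> 'I_n -> k)
    (A : 'rV[int]_m -> Prop) (b : 'rV[int]_n) : Prop :=
  forall a, A a -> pairing x a b = 1.

Lemma annihilator_subgroup (k : fieldType) (m n : nat) (x : 'I_m -> 'I_n -> k) A :
  (forall i j, x i j != 0) -> is_subgroup (annihilator x A).
Proof.
move=> x_neq0; split=> [a _|u v Bu Bv a Aa|u Bu a Aa]; first exact: pairing0r.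
  by rewrite pairingDr // (Bu _ Aa) (Bv _ Aa) mulr1.
apply: (mulIf (pairing_neq0 x_neq0 a u)).
by rewrite -pairingDr // addNr pairing0r (Bu _ Aa) mul1r.
Qed.

Definition int_row_rat (n : nat) (b : 'rV[int]_n) : 'rV[rat]_n := \row_j (b 0 j)%:~R.

Section AnnihilatorRank.
Variables (k : fieldType) (n m : nat) (x : 'I_m -> 'I_n -> k).
Variables (p : {mpoly k[n]} -> Prop) (n' : nat).
Hypotheses (x_neq0 : forall i j, x i j != 0) (pm : subideal p (@max_ideal_one k n))
  (p_height : prime_height p n').

Lemma annihilator_span_rank_ge (r : nat) (V : 'M[rat]_(r, n)) : \rank V = r ->
  (forall b, annihilator x (Stab x p) b -> (int_row_rat b <= V)%MS) -> (n' <= r)%N.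
Proof.
move=> rkV span_ann; have [C [cardC freeC]] := exists_free_coords rkV.
have sepC e1 e2 : mnm_supported C e1 -> mnm_supported C e2 ->
    (forall a, Stab x p a -> pairing x a (mnm_row e1) = pairing x a (mnm_row e2)) ->
    e1 = e2.
  move=> e1C e2C same_char.
  have ann12 : annihilator x (Stab x p) (mnm_row e1 - mnm_row e2).
    move=> a Sa; apply: (mulIf (pairing_neq0 x_neq0 a (mnm_row e2))).
    by rewrite -pairingDr // subrK mul1r same_char.
  have diff0 : int_row_rat (mnm_row e1 - mnm_row e2) = 0.
    apply: freeC (span_ann _ ann12) _ => j jC.
    by rewrite !mxE e1C ?e2C // subrr.
  apply/mnmP => j; have := congr1 (fun u : 'rV_n => u 0 j) diff0.
  by rewrite !mxE => /eqP; rewrite intr_eq0 subr_eq0 eqz_nat => /eqP.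
have gr_p := growth_free_monomials (stab_free_monomials x_neq0 pm sepC).
have [[c chain] _] := p_height.
have := prime_chain_growth_le chain gr_p; rewrite cardC.
by have := rank_leq_col V; rewrite rkV; lia.
Qed.

Lemma annihilator_rank : rank_at_least (annihilator x (Stab x p)) n'.
Proof.
suff : forall r, (r <= n')%N -> rank_at_least (annihilator x (Stab x p)) r by apply.
elim=> [_|r IH lt_rn'].
  exists (fun _ => 0); split=> [[]//|].
  by apply/eqP; rewrite -leqn0 rank_leq_row.
have [v [ann_v rkV]] := IH (ltnW lt_rn').
set V := \matrix_(i < r, j < n) _ in rkV.
have [[b [ann_b bV]]|] := classic (exists b, annihilator x (Stab x p) b /\
                                             ~~ (int_row_rat b <= V)%MS).
  exists (fun i : 'I_r.+1 => if unlift ord_max i is Some i' then v i' else b).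
  split=> [i|]; first by case: unlift.
  apply: (mxrank_extend rkV bV) => [i|]; apply/rowP => j; rewrite !mxE.
    by rewrite liftK.
  by rewrite unlift_none.
move=> no_b; suff : (n' <= r)%N by rewrite leqNgt lt_rn'.
apply: (annihilator_span_rank_ge rkV) => b ann_b.
by apply: NNPP => bV; apply: no_b; exists b; split=> //; exact/negP.
Qed.

End AnnihilatorRank.

Theorem lemma5p9 (k : fieldType) (n m : nat) (x : 'I_m -> 'I_n -> k)
  (p : {mpoly k[n]} -> Prop) (n' : nat) :
  [pchar k] =i pred0 ->
  (forall i j, x i j != 0) ->
  is_prime_ideal p ->
  subideal p (@max_ideal_one k n) ->
  prime_height p n' ->
  exists B : 'rV[int]_n -> Prop,
    [/\ is_subgroup B, rank_at_least B n' &
        forall a b, Stab x p a -> B b -> pairing x a b = 1].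
Proof.
move=> _ x_neq0 _ pm p_height; exists (annihilator x (Stab x p)); split.
- exact: annihilator_subgroup.
- exact: annihilator_rank.
- by move=> a b Sa ann_b; exact: ann_b.
Qed.
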